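(* Let $G=(V,E,H)$ be a HEDG and $U_1,U_2\subseteq V$ disjoint subsets. Then $(G^{\mathrm{marg}\setminus U_1})^{\mathrm{marg}\setminus U_2}=G^{\mathrm{marg}\setminus(U_1\cup U_2)}=(G^{\mathrm{marg}\setminus U_2})^{\mathrm{marg}\setminus U_1}$.
   Context: A HEDG is $G=(V,E,H)$ with $V$ finite, $E\subseteq V\times V$ directed edges (self-loops allowed), $H$ a simplicial complex on $V$ (a set of subsets of $V$ containing all singletons and closed under taking subsets). Marginalization of $G$ with respect to $U\subseteq V$: $G^{\mathrm{marg}\setminus U}=(V\setminus U,E',H')$ where $v_1\to v_2\in E'$ iff $G$ has a directed path $v_1\to u_1\to\cdots\to u_r\to v_2$ with $r\ge0$ and all $u_i\in U$; and $F'\subseteq V\setminus U$ belongs to $H'$ iff there exists $F\in H$ with $F\subseteq F'\cup U$ such that every $v\in F'$ either lies in $F\setminus U$ or there is a directed path $u_1\to\cdots\to u_r\to v$ in $G$ with $r\ge1$, all $u_i\in U$ and $u_1\in F\cap U$. *)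

From mathcomp Require Import all_boot.
Set Implicit Arguments. Unset Strict Implicit. Unset Printing Implicit Defensive.

(* A HEDG over an ambient finite type T: vertex set V, directed edges E
   (a relation, self-loops allowed), hyperedges H (a family of subsets). *)
Record hedg (T : finType) := Hedg {
  hV : {set T};
  hE : T -> T -> Prop;
  hH : {set T} -> Prop }.

Definition is_hedg (T : finType) (G : hedg T) : Prop :=
  (forall x y, hE G x y -> x \in hV G /\ y \in hV G) /\
  (forall F, hH G F -> F \subset hV G) /\
  (forall v, v \in hV G -> hH G [set v]) /\
  (forall F F' : {set T}, hH G F -> F' \subset F -> hH G F').

Fixpoint epath (T : finType) (G : hedg T) (x : T) (p : seq T) (y : T) : Prop :=
  match p with
  | [::] => hE G x y
  | z :: p' => hE G x z /\ epath G z p' y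
  end.

Definition marg (T : finType) (G : hedg T) (U : {set T}) : hedg T :=
  Hedg (hV G :\: U)
    (fun v1 v2 => v1 \in hV G :\: U /\ v2 \in hV G :\: U /\
       exists p : seq T, all (fun u => u \in U) p /\ epath G v1 p v2)
    (fun F' : {set T} => F' \subset hV G :\: U /\
       exists F : {set T}, hH G F /\ F \subset F' :|: U /\
         forall v, v \in F' ->
           v \in F :\: U \/
           exists u1, u1 \in F :&: U /\
             exists p : seq T, all (fun u => u \in U) p /\ epath G u1 p v).

Definition hedg_eq (T : finType) (G1 G2 : hedg T) : Prop :=
  hV G1 = hV G2 /\
  (forall x y, hE G1 x y <-> hE G2 x y) /\
  (forall F, hH G1 F <-> hH G2 F).

From mathcomp Require Import all_boot.
From mathcomp Require Import zify boolp.
Set Implicit Arguments. Unset Strict Implicit. Unset Printing Implicit Defensive.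

(* A directed path whose interior lies in U1 :|: U2 splits at its U2-vertices
   into paths with interior in U1, i.e. into edges of the U1-marginal; hence
   the edges of both sides agree.  For hyperedges, a witness F of the joint
   marginal yields the intermediate hyperedge F1 of the U1-marginal made of
   the vertices of F' :|: U2 reachable from F through U1; conversely the
   innermost witness of the iterated marginal also witnesses the joint one.
   The second equation is the first one with U1 and U2 exchanged. *)

Section Paths.
Variables (T : finType) (G : hedg T).
Implicit Types (A B U V : {set T}) (x y z : T) (p q r s : seq T).

(* By conversion, hE (marg G U) x y is [x, y \in hV G :\: U and upath G U x y],
   and hH (marg G U) F' says that F' \subset hV G :\: U and that some F in
   hH G with F \subset F' :|: U covers every vertex of F' through U. *)
Definition upath (U : {set T}) (x y : T) : Prop :=
  exists p, all (fun u => u \in U) p /\ epath G x p y.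

Definition covered (U F : {set T}) (v : T) : Prop :=
  v \in F :\: U \/ exists u, u \in F :&: U /\ upath U u v.

Lemma epath_cat x p z q y :
  epath G x (p ++ z :: q) y <-> epath G x p z /\ epath G z q y.
Proof. by elim: p x => [|a p IHp] x //=; rewrite IHp; tauto. Qed.

Lemma upath_trans U x z y :
  z \in U -> upath U x z -> upath U z y -> upath U x y.
Proof.
move=> zU [p [Up xz]] [q [Uq zy]]; exists (p ++ z :: q).
by rewrite all_cat /= Up zU Uq; split=> //; apply/epath_cat.
Qed.

Lemma upathS U V x y : U \subset V -> upath U x y -> upath V x y.
Proof.
by move=> /subsetP sUV [p [Up xy]]; exists p; split=> //; apply: sub_all Up.
Qed.

Lemma epath_splitU A B x p y :
  all (fun u => u \in A :|: B) p -> epath G x p y ->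
  all (fun u => u \in A) p \/
  exists r z s, [/\ p = r ++ z :: s, all (fun u => u \in A) r, z \in B,
                    epath G x r z & epath G z s y].
Proof.
move=> ABp xy; have AB_A q : all (fun u => u \in A :|: B) q ->
    ~~ has (fun u => u \in B) q -> all (fun u => u \in A) q.
  move=> /allP ABq /hasPn Bq; apply/allP => u uq.
  by move: (ABq u uq); rewrite inE (negbTE (Bq u uq)) orbF.
have [Bp|nBp] := boolP (has (fun u => u \in B) p); last by left; apply: AB_A.
right; case/split_find: Bp ABp xy => z r s Bz Br.
rewrite -cats1 -catA /= all_cat => /andP[ABr _] /epath_cat[xz zy].
by exists r, z, s; split=> //; apply: AB_A.
Qed.

End Paths.

Section MargMarg.
Variables (T : finType) (G : hedg T) (U1 U2 : {set T}).
Implicit Types (F S : {set T}) (x y z v w : T).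

Lemma upath_marg_setU x y :
  upath (marg G U1) U2 x y -> upath G (U1 :|: U2) x y.
Proof.
case=> p; elim: p x => [|z p IHp] x /= [U2p].
  by case=> _ [_ xy]; apply: upathS xy; apply: subsetUl.
case/andP: U2p => U2z U2p [[_ [_ xz]] zy].
apply: (upath_trans (z := z)); first by rewrite inE U2z orbT.
  by apply: upathS xz; apply: subsetUl.
exact: IHp.
Qed.

Lemma covered_marg_trans F F1 v :
  (forall w, w \in F1 -> covered G U1 F w) ->
  covered (marg G U1) U2 F1 v -> covered G (U1 :|: U2) F v.
Proof.
move=> covF1 [/setDP[vF1 vU2]|[u1 [/setIP[u1F1 u1U2] u1v]]].
  case: (covF1 v vF1) => [/setDP[vF vU1]|[u [uFU1 uv]]].
    by left; rewrite !inE negb_or vU1 vU2 vF.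
  by right; exists u; rewrite !inE; case/setIP: uFU1 => -> ->; split=> //;
     apply: upathS uv; apply: subsetUl.
have {}u1v := upath_marg_setU u1v; right.
case: (covF1 u1 u1F1) => [/setDP[u1F _]|[u [/setIP[uF uU1] uu1]]].
  by exists u1; rewrite !inE u1F u1U2 orbT.
exists u; split; first by rewrite !inE uF uU1.
apply: (upath_trans (z := u1)); first by rewrite inE u1U2 orbT.
  by apply: upathS uu1; apply: subsetUl.
exact: u1v.
Qed.

Hypotheses (U12 : [disjoint U1 & U2]) (sU2G : U2 \subset hV G).

Lemma U2_margV z : z \in U2 -> z \in hV G :\: U1.
Proof.
move=> zU2; rewrite inE (subsetP sU2G) // andbT.
by rewrite (disjointFl U12) // disjoint_sym.
Qed.

Lemma upath_setU_marg x y : x \in hV G :\: U1 -> y \in hV G :\: U1 ->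
  upath G (U1 :|: U2) x y -> upath (marg G U1) U2 x y.
Proof.
move=> xV yV [p]; have [n] := ubnP (size p).
elim: n p x xV => // n IHn p x xV ltpn [U12p xy].
have [U1p|[r [z [s [Ep U1r U2z xz zy]]]]] := epath_splitU U12p xy.
  by exists [::]; split=> //; do 2 split=> //; exists p.
move: ltpn U12p; rewrite Ep size_cat /= all_cat /= => ltpn /and3P[_ _ U12s].
have [|q [U2q zy']] := IHn s z (U2_margV U2z) _ (conj U12s zy); first lia.
exists (z :: q); split; first by rewrite /= U2z U2q.
by split=> //; do 2 split=> //; [exact: U2_margV | exists r].
Qed.

Lemma covered_setU_marg F S v :
  U2 \subset S -> v \in S -> v \in hV G :\: (U1 :|: U2) ->
  covered G (U1 :|: U2) F v ->
  covered (marg G U1) U2 [set w in S | `[< covered G U1 F w >]] v.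
Proof.
set F1 := [set w in S | _] => sU2S vS.
rewrite !inE negb_or => /andP[/andP[vU1 vU2] vG].
have vV : v \in hV G :\: U1 by rewrite inE vU1 vG.
have F1U2 w : w \in U2 -> covered G U1 F w -> w \in F1 :&: U2.
  by move=> wU2 covw; rewrite !inE (subsetP sU2S) // wU2 andbT; apply/asboolP.
have F1v : covered G U1 F v -> covered (marg G U1) U2 F1 v.
  by move=> covv; left; rewrite !inE vU2 vS; apply/asboolP.
case=> [/setDP[vF _]|[u [/setIP[uF /setUP[uU1|uU2]] [p [U12p uv]]]]].
- by apply: F1v; left; rewrite inE vU1 vF.
- have [U1p|[r [z [s [Ep U1r U2z uz zv]]]]] := epath_splitU U12p uv.
    by apply: F1v; right; exists u; split; [rewrite inE uF uU1 | exists p].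
  right; exists z; split.
    apply: F1U2 => //; right.
    by exists u; split; [rewrite inE uF uU1 | exists r].
  apply: upath_setU_marg (U2_margV U2z) vV _; exists s; split=> //.
  by move: U12p; rewrite Ep all_cat /= => /and3P[].
- have uV := U2_margV uU2; right; exists u; split.
    by apply: F1U2 => //; left; move: uV; rewrite !inE uF => /andP[->].
  by apply: upath_setU_marg uV vV _; exists p.
Qed.

Lemma marg_marg : hedg_eq (marg (marg G U1) U2) (marg G (U1 :|: U2)).
Proof.
have sV12 := setDS (hV G) (subsetUl U1 U2).
split; first by rewrite /= setDDl.
split=> [x y|F'] /=; rewrite setDDl.
  split=> -[xV [yV xy]]; do 2 split=> //; first exact: upath_marg_setU.
  by apply: upath_setU_marg; rewrite ?(subsetP sV12).
split=> [[sF' [F1 [[sF1 [F [HF [sF covF]]]] [sF1' covF1]]]] |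
          [sF' [F [HF [sF covF]]]]].
  split=> //; exists F; split=> //; split=> [|v vF']; last first.
    exact: covered_marg_trans covF (covF1 v vF').
  by rewrite setUA setUAC (subset_trans sF) ?setSU.
split=> //; exists [set w in F' :|: U2 | `[< covered G U1 F w >]].
split; last first.
  split=> [|v vF']; first by apply/subsetP => w; rewrite inE => /andP[].
  apply: covered_setU_marg; last exact: covF.
  - exact: subsetUr.
  - by rewrite inE vF'.
  - exact: (subsetP sF').
split.
  apply/subsetP => w; rewrite inE => /andP[+ _].
  by case/setUP => [/(subsetP sF')/(subsetP sV12)|/U2_margV].
exists F; split=> //; split=> [|w]; last by rewrite inE => /andP[_ /asboolP].
apply/subsetP => w wF; have [wU1|wU1] := boolP (w \in U1).
  by rewrite inE wU1 orbT.
have := subsetP sF w wF; rewrite !inE (negbTE wU1) orbF => -> /=.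
by apply/asboolP; left; rewrite inE wU1 wF.
Qed.
End MargMarg.

Lemma hedg_eq_sym (T : finType) (G1 G2 : hedg T) :
  hedg_eq G1 G2 -> hedg_eq G2 G1.
Proof.
case=> eqV [eqE eqH]; split=> //.
by split=> [x y|F]; symmetry; [apply: eqE | apply: eqH].
Qed.

Theorem mainTheorem17 (T : finType) (G : hedg T) (U1 U2 : {set T}) :
  is_hedg G -> U1 \subset hV G -> U2 \subset hV G -> [disjoint U1 & U2] ->
  hedg_eq (marg (marg G U1) U2) (marg G (U1 :|: U2)) /\
  hedg_eq (marg G (U1 :|: U2)) (marg (marg G U2) U1).
Proof.
move=> _ sU1G sU2G U12; split; first exact: marg_marg.
by apply: hedg_eq_sym; rewrite setUC; apply: marg_marg; rewrite // disjoint_sym.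
Qed.
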